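(* Fix an instance $I=\{H,M,\mathbf r\}$ of the offline Notification Timing Problem with $M$ employees and $L=M$ shifts. Let $\mathcal X=\{\mathcal X_i\}_{i\in\mathcal E}$ be any preference profile, and let $B^{\mathcal X}(S)$ denote the total number of (realized) bumps produced by a feasible schedule $S$ under $\mathcal X$. Let $S^*_{\mathcal X}$ be a feasible schedule minimizing $B^{\mathcal X}(S)$, let $S^*_p$ be a feasible schedule minimizing the total number of potential bumps $P(S)$, and let $S^*_I$ be a feasible schedule minimizing $B^{\mathcal I}(S)$, where $\mathcal I$ is the identical-preference profile (all employees have the same strict ranking of shifts). Then $$B^{\mathcal X}(S^*_{\mathcal X})\;\le\; P(S^*_p)\;=\;B^{\mathcal I}(S^*_I).$$
   Context: Employees $\mathcal E=\{1,\dots,M\}$ are ordered by seniority ($i<j$ means $i$ is more senior). Each employee $i$ has a response delay $r_i\in\mathbb Z_{\ge0}$; the horizon is $H\in\mathbb Z_{>0}$. A schedule is $S=(s_i,e_i)_{i\in\mathcal E}$ with notification times $s_i\ge 0$ and response times $e_i=s_i+r_i$; it is feasible if $s_1\le s_2\le\dots\le s_M$ and $e_i\le H$ for all $i$. There are $L=M$ shifts $\mathcal L$, and each employee $i$ has a strict preference order $\mathcal X_i$ over all shifts. Assignment dynamics: responses are processed in increasing order of response time; employees responding at the same time are processed in order of seniority. When an employee $i$ responds (or is bumped), $i$ claims its most preferred shift among those not currently held by an employee more senior than $i$. If that shift is unoccupied, $i$ takes it; if it is held by a junior employee $j>i$, then $i$ takes it, $j$ is bumped (this counts as one bump), and $j$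 immediately repeats the same rule; this may create a chain of bumps. If no shift is available, the employee gets no shift. The total number of bumps $B^{\mathcal X}(S)$ is the total number of such bump events over the whole process. Potential bumps: for a schedule $S$, $p_i=|\{j\in\mathcal E: i<j,\ e_i>e_j\}|$ and $P(S)=\sum_{i\in\mathcal E}p_i$ (the number of pairs in which a senior employee responds strictly later than a junior one). *)

From mathcomp Require Import all_boot all_fingroup.
Set Implicit Arguments. Unset Strict Implicit. Unset Printing Implicit Defensive.

(* Employees and shifts are both 'I_M (L = M); smaller index = more senior. *)
(* A schedule is given by its notification times s : 'I_M -> nat; the
   response time of i is e i = s i + r i. *)
Definition resp M (r s : 'I_M -> nat) (i : 'I_M) : nat := s i + r i.

Definition feasible M (H : nat) (r s : 'I_M -> nat) : Prop :=
  (forall i j : 'I_M, i <= j -> s i <= s j) /\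
  (forall i : 'I_M, resp r s i <= H).

(* A preference profile: X i k is employee i's (k+1)-th most preferred shift;
   X i is a permutation, i.e. a strict ranking of all shifts. *)
Definition profile M := 'I_M -> {perm 'I_M}.

(* state: for each shift, the employee currently holding it (if any) *)
Definition state M := {ffun 'I_M -> option 'I_M}.

Definition empty_state M : state M := [ffun _ => None].

Definition avail M (st : state M) (i l : 'I_M) : bool :=
  if st l is Some j then i < j else true.

Definition choice M (X : profile M) (st : state M) (i : 'I_M) : option 'I_M :=
  ohead [seq l <- [seq X i k | k <- enum 'I_M] | avail st i l].

Definition upd M (st : state M) (l i : 'I_M) : state M :=
  [ffun l' => if l' == l then Some i else st l'].

(* i claims a shift; returns new state and number of bumps in the chain.
   Fuel: each chain has strictly increasing claimant indices, so at most M
   claims occur; fuel M.+1 is never exhausted. *)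
Fixpoint claim M (X : profile M) (fuel : nat) (st : state M) (i : 'I_M)
  : state M * nat :=
  match fuel with
  | 0 => (st, 0)
  | n.+1 =>
    match choice X st i with
    | None => (st, 0)
    | Some l =>
      match st l with
      | None => (upd st l i, 0)
      | Some j => let p := claim X n (upd st l i) j in (p.1, p.2.+1)
      end
    end
  end.

Definition proc_order M (r s : 'I_M -> nat) : seq 'I_M :=
  sort (fun i j : 'I_M => (resp r s i < resp r s j) ||
                          ((resp r s i == resp r s j) && (i <= j)))
       (enum 'I_M).

Definition run M (X : profile M) (ord : seq 'I_M) : state M * nat :=
  foldl (fun p i => let q := claim X M.+1 p.1 i in (q.1, p.2 + q.2))
        (empty_state M, 0) ord.

Definition bumps M (X : profile M) (r s : 'I_M -> nat) : nat :=
  (run X (proc_order r s)).2.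

Definition potential M (r s : 'I_M -> nat) : nat :=
  \sum_(i < M) \sum_(j < M | (i < j) && (resp r s j < resp r s i)) 1.

Definition is_min M (H : nat) (r : 'I_M -> nat) (f : ('I_M -> nat) -> nat)
  (S : 'I_M -> nat) : Prop :=
  feasible H r S /\ forall S', feasible H r S' -> f S <= f S'.

From HB Require Import structures.
From mathcomp Require Import all_boot all_fingroup zify.
Set Implicit Arguments. Unset Strict Implicit. Unset Printing Implicit Defensive.

(* When employee i responds, every bump of the chain it starts displaces a
   distinct current holder junior to i.  Holders have already responded, and a
   junior employee processed before i responded strictly earlier, so the chain
   costs at most p_i bumps: B^X(S) <= P(S) for every schedule S.
   Under identical preferences the assignment stays canonical: the current
   holders occupy the top shifts in order of seniority.  An arriving employee
   claims the shift of its seniority rank among the holders, and the chain moves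
   each junior holder down by one shift, so it costs exactly p_i bumps and
   B^I(S) = P(S). *)

Section Ranks.
Variable M : nat.
Implicit Types (A : {set 'I_M}) (P : pred 'I_M).

Definition rank A (x : 'I_M) := #|[set y in A | y < x]|.
Definition above A (x : 'I_M) := #|[set y in A | x < y]|.

Lemma card_sepU1 A c P :
  c \notin A -> #|[set y in c |: A | P y]| = P c + #|[set y in A | P y]|.
Proof.
move=> cA; case Pc: (P c).
  have -> : [set y in c |: A | P y] = c |: [set y in A | P y].
    by apply/setP => y; rewrite !inE; case: (y =P c) => [->|]; rewrite ?Pc.
  by rewrite cardsU1 inE (negbTE cA).
apply: eq_card => y; rewrite !inE.
by case: (y =P c) => [->|]; rewrite ?Pc ?(negbTE cA).
Qed.

Lemma card_sepD1 A j P :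
  j \in A -> #|[set y in A | P y]| = P j + #|[set y in A :\ j | P y]|.
Proof. by move=> jA; rewrite -{1}(setD1K jA) card_sepU1 // !inE eqxx. Qed.

Lemma card_sep_le A P : #|[set y in A | P y]| <= #|A|.
Proof. by apply: subset_leq_card; apply/subsetP => y; rewrite inE => /andP[]. Qed.

Lemma card_ltn_notin A c : c \notin A -> #|A| < M.
Proof. by move=> cA; move: (max_card (c |: A)); rewrite cardsU1 cA card_ord. Qed.

Lemma rank_ltn A (x y : 'I_M) : x \in A -> x < y -> rank A x < rank A y.
Proof.
move=> xA xy; apply: proper_card; apply/properP; split.
  by apply/subsetP => z; rewrite !inE => /andP[-> /ltn_trans]; apply.
by exists x; rewrite !inE ?xA ?ltnn ?andbF.
Qed.

Lemma rank_leq A (x y : 'I_M) : x <= y -> rank A x <= rank A y.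
Proof.
move=> xy; apply: subset_leq_card.
by apply/subsetP => z; rewrite !inE => /andP[-> /leq_trans]; apply.
Qed.

Lemma rank_ltn_card A (x : 'I_M) : x \in A -> rank A x < #|A|.
Proof.
move=> xA; apply: proper_card; apply/properP; split.
  by apply/subsetP => z; rewrite inE => /andP[].
by exists x; rewrite ?inE ?ltnn ?andbF.
Qed.

Lemma rank_inj A : {in A &, injective (rank A)}.
Proof.
move=> x y xA yA rxy; apply: val_inj.
case: (ltngtP x y) => // [/(rank_ltn xA)|/(rank_ltn yA)]; by rewrite rxy ltnn.
Qed.

Lemma rank_surj A k : k < #|A| -> exists2 x, x \in A & rank A x = k.
Proof.
move=> kA; set s := [seq rank A x | x <- enum A].
have us : uniq s.
  rewrite map_inj_in_uniq ?enum_uniq // => x y.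
  by rewrite !mem_enum; apply: rank_inj.
have sub : {subset s <= iota 0 #|A|}.
  by move=> _ /mapP[x xA ->]; rewrite mem_iota rank_ltn_card // -mem_enum.
have [|_ eq_s] := uniq_min_size us sub; first by rewrite size_iota size_map -cardE.
have /mapP[x xA ->] : k \in s by rewrite eq_s mem_iota.
by exists x; rewrite // -mem_enum.
Qed.

(* Equal ranks make [j] the successor of [c] in [c |: A]. *)
Lemma rank_eq_successor A (c j : 'I_M) :
  c \notin A -> j \in A -> rank A j = rank A c ->
  c < j /\ {in A, forall x, x != j -> (c < x) = (j < x)}.
Proof.
move=> cA jA rjc.
have cj : c < j.
  case: (ltngtP c j) => // [jc|/val_inj ecj]; last by rewrite ecj jA in cA.
  by have := rank_ltn jA jc; rewrite rjc ltnn.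
split=> // x xA xj; case: (ltnP c x) => [cx|xc].
  case: (ltngtP x j) => [xj'|//|/val_inj exj]; last by rewrite exj eqxx in xj.
  by have := rank_ltn xA xj'; rewrite rjc ltnNge rank_leq // ltnW.
by rewrite ltnNge (ltnW (leq_ltn_trans xc cj)).
Qed.

End Ranks.

HB.lock Definition holders M (st : state M) : {set 'I_M} :=
  [set k | [exists l, st l == Some k]].

Section Holders.
Variable M : nat.
Implicit Types (st : state M) (X : profile M).

Lemma holdersP st k : reflect (exists l, st l = Some k) (k \in holders st).
Proof.
rewrite holders.unlock inE.
by apply: (iffP existsP) => -[l h]; exists l; [exact/eqP | rewrite h].
Qed.

Lemma holders0 : holders (empty_state M) = set0.
Proof.
by apply/setP => k; rewrite in_set0; apply/negbTE/holdersP => -[l]; rewrite ffunE.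
Qed.

Lemma holders_upd st l i : holders (upd st l i) \subset i |: holders st.
Proof.
apply/subsetP => k /holdersP[l']; rewrite /upd ffunE in_setU1.
case: (l' == l) => [[->]|h]; first by rewrite eqxx.
by apply/orP; right; apply/holdersP; exists l'.
Qed.

Lemma choice_avail X st i l : choice X st i = Some l -> avail st i l.
Proof.
rewrite /choice; case E: [seq _ <- _ | _] => [|a s] //= [<-].
have : a \in a :: s by rewrite mem_head.
by rewrite -E mem_filter => /andP[].
Qed.

Lemma claim_holders X n st i : holders (claim X n st i).1 \subset i |: holders st.
Proof.
elim: n st i => [|n IH] st i /=; first exact: subsetUr.
case E: (choice X st i) => [l|] /=; last exact: subsetUr.
case El: (st l) => [j|] /=; last exact: holders_upd.
apply: subset_trans (IH _ _) _; apply/subsetP => y.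
case/setU1P => [->|/(subsetP (holders_upd st l i)) //].
by apply/setU1P; right; apply/holdersP; exists l.
Qed.

Lemma claim_bumps_le X n st i : (claim X n st i).2 <= above (holders st) i.
Proof.
elim: n st i => [|n IH] st i //=.
case E: (choice X st i) => [l|] //=; case El: (st l) => [j|] //=.
have ij : i < j by have := choice_avail E; rewrite /avail El.
have jh : j \in holders st by apply/holdersP; exists l.
apply: leq_ltn_trans (IH _ _) _; apply: proper_card; apply/properP; split.
  apply/subsetP => y; rewrite !inE => /andP[yh jy].
  rewrite (ltn_trans ij jy) andbT.
  case/setU1P: (subsetP (holders_upd st l i) y yh) => // yi.
  by move: (ltn_trans ij jy); rewrite yi ltnn.
by exists j; rewrite !inE ?ltnn ?andbF ?jh.
Qed.

End Holders.

Definition step M (X : profile M) (p : state M * nat) (i : 'I_M) : state M * nat :=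
  let q := claim X M.+1 p.1 i in (q.1, p.2 + q.2).

Lemma bumpsE M (X : profile M) r s :
  bumps X r s = (foldl (step X) (empty_state M, 0) (proc_order r s)).2.
Proof. by []. Qed.

(* The potential bumps of processing [p] when the employees of [Q] have
   already responded. *)
Fixpoint order_potential M (Q : {set 'I_M}) (p : seq 'I_M) : nat :=
  if p is a :: p' then above Q a + order_potential (a |: Q) p' else 0.

Lemma run_bumps_le M (X : profile M) p (Q : {set 'I_M}) (st : state M) b :
  holders st \subset Q -> (foldl (step X) (st, b) p).2 <= b + order_potential Q p.
Proof.
elim: p Q st b => [|a p IH] Q st b hQ /=; first by rewrite addn0.
apply: leq_trans (IH (a |: Q) _ _ _) _.
  exact: subset_trans (claim_holders X M.+1 st a) (setUS [set a] hQ).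
rewrite -addnA leq_add2l leq_add2r; apply: leq_trans (claim_bumps_le _ _ _ _) _.
apply: subset_leq_card; apply/subsetP => y.
by rewrite !inE => /andP[/(subsetP hQ) -> ->].
Qed.

Lemma ohead_filter_index (T : eqType) (P : pred T) (s : seq T) x :
  x \in s -> P x -> {in s, forall y, index y s < index x s -> ~~ P y} ->
  ohead (filter P s) = Some x.
Proof.
elim: s => [//|a s IH] /=; rewrite in_cons => xs Px h.
case: (a =P x) => [->|ax]; first by rewrite Px.
rewrite (negbTE (h a (mem_head a s) _)); last by rewrite /= eqxx; case: (a =P x).
apply: IH => //; first by case/orP: xs => // /eqP ex; case: ax.
move=> y ys hy; apply: h; first by rewrite in_cons ys orbT.
by move: hy; rewrite /=; case: (a =P y) => // _; case: (a =P x).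
Qed.

Section IdenticalPreferences.
Variables (M : nat) (sigma : {perm 'I_M}).
Implicit Types (Q R : {set 'I_M}) (st : state M).

Local Notation identical := (fun _ : 'I_M => sigma).

(* The employees of [Q] hold the shifts [sigma 0], ..., [sigma (#|Q| - 1)],
   in order of seniority. *)
Definition canonical Q st := forall k x : 'I_M,
  (st (sigma k) == Some x) = (x \in Q) && (rank Q x == k).

Lemma canonical0 : canonical set0 (empty_state M).
Proof. by move=> k x; rewrite ffunE inE. Qed.

Lemma canonical_holder Q st k x :
  canonical Q st -> st (sigma k) = Some x -> x \in Q /\ rank Q x = k.
Proof. by move=> cs h; have := cs k x; rewrite h eqxx => /esym/andP[-> /eqP]. Qed.

Lemma canonical_occupied Q st (k : 'I_M) : canonical Q st -> k < #|Q| ->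
  exists2 x, x \in Q & st (sigma k) = Some x /\ rank Q x = k.
Proof.
move=> cs /rank_surj[x xQ rx]; exists x => //; split=> //.
by apply/eqP; rewrite cs xQ rx eqxx.
Qed.

Lemma choice_ident_first st c (k : 'I_M) : avail st c (sigma k) ->
  (forall k' : 'I_M, k' < k -> ~~ avail st c (sigma k')) ->
  choice identical st c = Some (sigma k).
Proof.
move=> ak hk; apply: ohead_filter_index => //; first by rewrite map_f ?mem_enum.
move=> _ /mapP[k' _ ->]; rewrite !(index_map (@perm_inj _ sigma)).
by rewrite !index_enum_ord; apply: hk.
Qed.

Lemma canonical_choice Q st c (k : 'I_M) :
  canonical Q st -> c \notin Q -> rank Q c = k ->
  choice identical st c = Some (sigma k).
Proof.
move=> cs cQ rc; apply: choice_ident_first => [|k' k'k].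
  rewrite /avail; case E: (st (sigma k)) => [j|] //.
  have [jQ rj] := canonical_holder cs E.
  by have [] := rank_eq_successor cQ jQ (etrans rj (esym rc)).
have k'Q : k' < #|Q| by apply: leq_trans k'k _; rewrite -rc; apply: card_sep_le.
have [x xQ [Ex rx]] := canonical_occupied cs k'Q; rewrite /avail Ex -leqNgt.
by apply: contraLR k'k; rewrite -ltnNge -leqNgt -rx -rc => /ltnW /(rank_leq Q).
Qed.

Lemma canonical_upd Q R st c (k : 'I_M) :
  canonical Q st -> c \notin Q -> R \subset Q ->
  {in R, forall x, rank (c |: R) x = rank Q x} -> rank (c |: R) c = k ->
  {in Q, forall x, (x \notin R) = (st (sigma k) == Some x)} ->
  canonical (c |: R) (upd st (sigma k) c).
Proof.
move=> cs cQ RQ rkR rkc out k' x.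
rewrite ffunE (inj_eq (@perm_inj _ sigma)) in_setU1.
have [-> | xc] := eqVneq x c.
  rewrite rkc /=; case: (eqVneq k' k) => [->|nk]; first by rewrite !eqxx.
  by rewrite cs (negbTE cQ) /= eq_sym; apply/esym/negbTE.
rewrite /=; case: (eqVneq k' k) => [->|nk].
  rewrite (inj_eq Some_inj) eq_sym (negbTE xc).
  apply/esym/negbTE/andP => -[xR /eqP rx].
  have xQ := subsetP RQ x xR.
  by move: (out x xQ); rewrite xR cs xQ -rkR // rx eqxx.
case xR: (x \in R) => /=; first by rewrite rkR // cs (subsetP RQ x xR).
rewrite cs; apply/negbTE/andP => -[xQ /eqP rx].
by move: (out x xQ); rewrite xR cs xQ rx => /esym /andP[_]; apply/negP.
Qed.

Lemma canonical_take Q st c (k : 'I_M) :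
  canonical Q st -> c \notin Q -> rank Q c = k -> st (sigma k) = None ->
  canonical (c |: Q) (upd st (sigma k) c) /\ above Q c = 0.
Proof.
move=> cs cQ rc Est.
have Qc : {in Q, forall x : 'I_M, x < c}.
  move=> x xQ; rewrite ltnNge; apply/negP => cx.
  have kQ : k < #|Q|.
    by rewrite -rc (leq_ltn_trans (rank_leq Q cx) (rank_ltn_card xQ)).
  by have [y _ [Ey _]] := canonical_occupied cs kQ; rewrite Est in Ey.
have rkQ x : x \in Q -> rank (c |: Q) x = rank Q x.
  by move=> xQ; rewrite /rank card_sepU1 // ltnNge (ltnW (Qc x xQ)).
split.
  apply: canonical_upd => //; first by rewrite /rank card_sepU1 // ltnn.
  by move=> x xQ; rewrite xQ Est.
apply/eqP; rewrite cards_eq0; apply/eqP/setP => y; rewrite !inE.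
by case yQ: (y \in Q) => //=; rewrite ltnNge (ltnW (Qc y yQ)).
Qed.

Lemma canonical_bump Q st c j (k : 'I_M) :
  canonical Q st -> c \notin Q -> rank Q c = k -> st (sigma k) = Some j ->
  [/\ c < j, canonical (c |: Q :\ j) (upd st (sigma k) c) &
      above Q c = (above (c |: Q :\ j) j).+1].
Proof.
move=> cs cQ rc Est; have [jQ rj] := canonical_holder cs Est.
have [cj succ] := rank_eq_successor cQ jQ (etrans rj (esym rc)).
have cQj : c \notin Q :\ j by rewrite in_setD1 (negbTE cQ) andbF.
split=> //.
  apply: canonical_upd => //; first exact: subD1set.
  - move=> x /setD1P[xj xQ]; rewrite /rank card_sepU1 // (card_sepD1 _ jQ).
    by rewrite (succ x xQ xj).
  - by rewrite -rc /rank card_sepU1 // ltnn (card_sepD1 _ jQ) ltnNge (ltnW cj).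
  - by move=> x xQ; rewrite Est in_setD1 xQ andbT negbK (inj_eq Some_inj) eq_sym.
rewrite /above (card_sepD1 _ jQ) cj card_sepU1 // ltnNge (ltnW cj); congr _.+1.
apply: eq_card => y; rewrite !inE; case: (eqVneq y j) => //= yj.
by case yQ: (y \in Q); rewrite //= succ.
Qed.

Lemma claim_identical n Q st c : canonical Q st -> c \notin Q -> above Q c < n ->
  canonical (c |: Q) (claim identical n st c).1 /\
  (claim identical n st c).2 = above Q c.
Proof.
elim: n Q st c => [//|n IH] Q st c cs cQ abn.
have kM : rank Q c < M := leq_ltn_trans (card_sep_le _ _) (card_ltn_notin cQ).
pose k := Ordinal kM; have rc : rank Q c = k by [].
rewrite /= (canonical_choice cs cQ rc).
case Est: (st (sigma k)) => [j|] /=; last first.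
  by have [? ->] := canonical_take cs cQ rc Est.
have [cj cs' abQ] := canonical_bump cs cQ rc Est.
have jQ' : j \notin c |: Q :\ j.
  by rewrite !inE eqxx orbF; apply: contraTN cj => /eqP ->; rewrite ltnn.
have [|cs'' ->] := IH _ _ j cs' jQ'; first by rewrite -ltnS -abQ.
have jQ : j \in Q by have [] := canonical_holder cs Est.
by rewrite abQ; rewrite setUCA setD1K in cs''.
Qed.

End IdenticalPreferences.

Lemma run_bumps_identical M (sigma : {perm 'I_M}) p (Q : {set 'I_M}) (st : state M) b :
  canonical sigma Q st -> uniq p -> [disjoint p & Q] ->
  (foldl (step (fun _ => sigma)) (st, b) p).2 = b + order_potential Q p.
Proof.
elim: p Q st b => [|a p IH] Q st b cs /=; first by rewrite addn0.
case/andP=> ap up; rewrite disjoint_cons => /andP[aQ dQ].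
have abM : above Q a < M.+1.
  by rewrite ltnS (leq_trans (card_sep_le _ _) (ltnW (card_ltn_notin aQ))).
have [cs' bumps_a] := claim_identical cs aQ abM.
rewrite (IH (a |: Q)) //= ?bumps_a ?addnA //.
move: dQ; rewrite !disjoint_has => /hasPn dQ; apply/hasPn => x xp.
by rewrite in_setU1 negb_or dQ // andbT; apply: contraNneq ap => <-.
Qed.

Section ProcessingOrder.
Variables (M : nat) (r s : 'I_M -> nat).

Definition resp_le (i j : 'I_M) :=
  (resp r s i < resp r s j) || ((resp r s i == resp r s j) && (i <= j)).

Lemma resp_le_total : total resp_le.
Proof. by move=> i j; rewrite /resp_le; lia. Qed.

Lemma resp_le_trans : transitive resp_le.
Proof. by move=> j i k; rewrite /resp_le; lia. Qed.

Lemma resp_le_junior (i j : 'I_M) : resp_le i j -> j < i -> resp r s i < resp r s j.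
Proof. by rewrite /resp_le; lia. Qed.

Lemma order_potential_sorted p (Q U : {set 'I_M}) : sorted resp_le p ->
  {in Q & p, forall q a, resp_le q a} -> Q :|: [set x in p] = U ->
  order_potential Q p =
  \sum_(a <- p) #|[set k in U | (a < k) && (resp r s k < resp r s a)]|.
Proof.
elim: p Q => [|a p IH] Q srt hQ hU /=; first by rewrite big_nil.
have a_min := order_path_min resp_le_trans srt.
rewrite big_cons; congr (_ + _).
  apply: eq_card => k; rewrite -hU !inE.
  case kQ: (k \in Q) => /=.
    case ak: (a < k) => //=.
    by apply/esym/(resp_le_junior _ ak)/hQ; rewrite ?mem_head.
  case: (k =P a) => [->|ka] /=; first by rewrite ltnn.
  case kp: (k \in p) => //=; have := allP a_min k kp; rewrite /resp_le; lia.
apply: IH; first exact: path_sorted srt.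
- move=> q b /setU1P[-> bp|qQ bp]; first exact: allP a_min b bp.
  by apply: hQ => //; rewrite in_cons bp orbT.
- by apply/setP => y; rewrite -hU !inE; case: (y =P a) => //=; rewrite orbT.
Qed.

Lemma order_potential_proc_order :
  order_potential set0 (proc_order r s) = potential r s.
Proof.
have po : proc_order r s = sort resp_le (enum 'I_M) by [].
rewrite (@order_potential_sorted _ set0 setT).
- rewrite /potential (perm_big (index_enum 'I_M)); last first.
    apply: uniq_perm; first by rewrite po sort_uniq enum_uniq.
      exact: index_enum_uniq.
    by move=> x; rewrite po mem_sort mem_enum mem_index_enum.
  by apply: eq_bigr => i _; rewrite sum1dep_card; apply: eq_card => k; rewrite !inE.
- by rewrite po; exact: (sort_sorted resp_le_total).
- by move=> q a; rewrite inE.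
- by apply/setP => y; rewrite !inE po mem_sort mem_enum.
Qed.

End ProcessingOrder.

Lemma bumps_le_potential M (X : profile M) r s : bumps X r s <= potential r s.
Proof.
rewrite bumpsE -order_potential_proc_order -[order_potential _ _]add0n.
by apply: run_bumps_le; rewrite holders0 sub0set.
Qed.

Lemma bumps_identical M (sigma : {perm 'I_M}) r s :
  bumps (fun _ => sigma) r s = potential r s.
Proof.
rewrite bumpsE (run_bumps_identical (Q := set0)) ?add0n ?order_potential_proc_order //.
- exact: canonical0.
- by rewrite sort_uniq enum_uniq.
- by rewrite disjoint_has; apply/hasPn => x; rewrite inE.
Qed.

Theorem theorem1 (M H : nat) (r : 'I_M -> nat) (X : profile M)
  (sigma : {perm 'I_M}) (SX Sp SI : 'I_M -> nat) :
  0 < H ->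
  is_min H r (bumps X r) SX ->
  is_min H r (potential r) Sp ->
  is_min H r (bumps (fun _ => sigma) r) SI ->
  bumps X r SX <= potential r Sp /\
  potential r Sp = bumps (fun _ => sigma) r SI.
Proof.
move=> _ [_ minX] [fp minp] [fI minI]; split.
  exact: leq_trans (minX _ fp) (bumps_le_potential _ _ _).
apply/eqP; rewrite eqn_leq bumps_identical minp //=.
by have := minI _ fp; rewrite !bumps_identical.
Qed.
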